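(* Let $R'\subseteq R$ be (not necessarily commutative) subrings of a $\mathbb Q$-algebra and let $d\ge1$ be an integer with $dR\subseteq R'$. Then $|R^\times/R'^\times|\le|R/dR|$.
   Context: $R^\times$ denotes the unit group of $R$, and $R^\times/R'^\times$ the set of cosets of the subgroup $R'^\times$. *)

From HB Require Import structures.
From mathcomp Require Import all_boot all_order all_algebra.
From mathcomp Require Import boolp classical_sets cardinality.
Set Implicit Arguments. Unset Strict Implicit. Unset Printing Implicit Defensive.
Import GRing.Theory.
Local Open Scope ring_scope.
Local Open Scope classical_set_scope.

Definition is_subring (A : pzRingType) (S : set A) : Prop :=
  S 1 /\ (forall x y, S x -> S y -> S (x - y)) /\
  (forall x y, S x -> S y -> S (x * y)).

Definition units_of (A : pzRingType) (S : set A) : set A :=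
  [set x | S x /\ exists2 y, S y & x * y = 1 /\ y * x = 1].

(* The set of (left) cosets u S'^x of the unit group of S' in that of S:
   the quotient S^x / S'^x, as a set of subsets of A. *)
Definition unit_cosets (A : pzRingType) (S S' : set A) : set (set A) :=
  [set [set u * w | w in units_of S'] | u in units_of S].

(* d S = { d r | r in S } and the additive quotient S / dS, as a set of cosets. *)
Definition mul_nat_set (A : pzRingType) (d : nat) (S : set A) : set A :=
  [set d%:R * r | r in S].

Definition add_cosets (A : pzRingType) (d : nat) (S : set A) : set (set A) :=
  [set [set x + y | y in mul_nat_set d S] | x in S].

From HB Require Import structures.
From mathcomp Require Import all_boot all_order all_algebra.
From mathcomp Require Import boolp classical_sets cardinality.
Set Implicit Arguments. Unset Strict Implicit. Unset Printing Implicit Defensive.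

Local Open Scope ring_scope.
Local Open Scope classical_set_scope.
Local Open Scope card_scope.

Import GRing.Theory.

(* Two units of R that are congruent modulo dR generate the same coset of
   R'^x: if v = u + d r then u^-1 v = 1 + d u^-1 r lies in R', and so does its
   inverse v^-1 u.  Hence u R'^x depends only on the class of u in R/dR, and
   choosing a unit in each class that contains one maps a subset of R/dR onto
   R^x/R'^x. *)

Section Subring.

Variables (A : pzRingType) (S : set A).
Hypothesis subS : is_subring S.

Lemma subring0 : S 0.
Proof. by have [S1 [SB _]] := subS; rewrite -(subrr 1); exact: SB. Qed.

Lemma subringN x : S x -> S (- x).
Proof. by have [_ [SB _]] := subS; rewrite -sub0r; apply: SB; exact: subring0. Qed.

Lemma subringD x y : S x -> S y -> S (x + y).
Proof.
by have [_ [SB _]] := subS => Sx Sy; rewrite -(opprK y); apply: SB => //; exact: subringN.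
Qed.

Lemma units_ofM x y : units_of S x -> units_of S y -> units_of S (x * y).
Proof.
have [_ [_ SM]] := subS.
move=> [Sx [x' Sx' [xx' x'x]]] [Sy [y' Sy' [yy' y'y]]].
split; first exact: SM.
exists (y' * x'); first exact: SM.
split.
- by rewrite mulrA -(mulrA x) yy' mulr1 xx'.
- by rewrite mulrA -(mulrA y') x'x mulr1 y'y.
Qed.

End Subring.

Definition unit_lcoset (A : pzRingType) (S' : set A) (u : A) : set A :=
  [set u * w | w in units_of S'].

Definition add_coset (A : pzRingType) (d : nat) (S : set A) (x : A) : set A :=
  [set x + y | y in mul_nat_set d S].

Lemma unit_lcoset_subset (A : pzRingType) (S' : set A) u u' v :
  is_subring S' -> u * u' = 1 -> units_of S' (u' * v) ->
  unit_lcoset S' v `<=` unit_lcoset S' u.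
Proof.
move=> subS' uu' Uu'v _ [w Uw <-].
exists (u' * v * w); first exact: units_ofM.
by rewrite !mulrA uu' mul1r.
Qed.

Section UnitsModuloDR.

Variables (A : pzRingType) (R R' : set A) (d : nat).
Hypotheses (subR : is_subring R) (subR' : is_subring R').
Hypothesis dRR' : mul_nat_set d R `<=` R'.

Lemma subring_linv_mulD u u' r :
  R u' -> R r -> u' * u = 1 -> R' (u' * (u + d%:R * r)).
Proof.
have [R'1 _] := subR'; have [_ [_ RM]] := subR.
move=> Ru' Rr u'u.
rewrite mulrDr u'u !mulr_natl mulrnAr -mulr_natl; apply: subringD => //.
by apply: dRR'; exists (u' * r) => //; exact: RM.
Qed.

Lemma unit_lcoset_congr u v r :
  units_of R u -> units_of R v -> R r -> v = u + d%:R * r ->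
  unit_lcoset R' u = unit_lcoset R' v.
Proof.
move=> [_ [u' Ru' [uu' u'u]]] [_ [v' Rv' [vv' v'v]]] Rr vE.
have uE : u = v + d%:R * - r by rewrite vE mulrN addrK.
have R'u'v : R' (u' * v) by rewrite vE; exact: subring_linv_mulD.
have R'v'u : R' (v' * u) by rewrite uE; apply: subring_linv_mulD => //; exact: subringN.
have u'vv'u : u' * v * (v' * u) = 1 by rewrite mulrA -(mulrA u') vv' mulr1.
have v'uu'v : v' * u * (u' * v) = 1 by rewrite mulrA -(mulrA v') uu' mulr1.
apply/seteqP; split.
- by apply: (unit_lcoset_subset subR' vv'); split => //; exists (u' * v).
- by apply: (unit_lcoset_subset subR' uu'); split => //; exists (v' * u).
Qed.

Lemma unit_in_add_coset u :
  units_of R u -> (add_coset d R u `&` units_of R) u.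
Proof.
split=> //; exists 0; last by rewrite addr0.
by exists 0; [exact: subring0 | rewrite mulr0].
Qed.

Lemma unit_cosets_sub_image :
  unit_cosets R R' `<=`
  (fun X => unit_lcoset R' (xget 0 (X `&` units_of R))) @` add_cosets d R.
Proof.
move=> _ [u Uu <-].
exists (add_coset d R u); first by exists u => //; case: Uu.
have := xgetI 0 (unit_in_add_coset Uu).
move: (xget _ _) => v [[_ [r Rr <-] vE] Uv].
by symmetry; exact: (unit_lcoset_congr Uu Uv Rr (esym vE)).
Qed.

End UnitsModuloDR.

Theorem lemma10p11 (A : algType rat) (R R' : set A) (d : nat) :
  is_subring R -> is_subring R' -> R' `<=` R -> (1 <= d)%N ->
  mul_nat_set d R `<=` R' ->
  unit_cosets R R' #<= add_cosets d R.
Proof.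
move=> subR subR' _ _ dRR'.
apply: card_le_trans (subset_card_le (unit_cosets_sub_image subR subR' dRR')) _.
exact: card_image_le.
Qed.
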